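(* Let $(\mathcal A,\phi)$ be a noncommutative probability space and $\mathcal F$ its free exchangeability system. For every noncrossing partition $\pi\in NC_n$ and all $X_1,\dots,X_n\in\mathcal A$, $$\phi^{\mathcal F}_\pi(X_1,\dots,X_n)=\prod_{B\in\pi}\phi\Big(\prod_{i\in B}X_i\Big),\qquad K^{\mathcal F}_\pi(X_1,\dots,X_n)=\prod_{B\in\pi}K^{\mathcal F}_{|B|}(X_i:i\in B),$$ where products and sequences within a block are taken in increasing order of the indices.
   Context: A noncommutative probability space is a pair $(\mathcal A,\phi)$ of a complex unital algebra $\mathcal A$ and a unital linear functional $\phi$. The free exchangeability system $\mathcal F$: $\mathcal U$ is the (unital, algebraic) free product of countably many copies $\mathcal A_k$, $k\in\mathbb N$, of $\mathcal A$, $\tilde\phi$ is the free product functional of copies of $\phi$ (characterized by $\tilde\phi(1)=1$, $\tilde\phi$ restricting to $\phi$ on each copy, and $\tilde\phi(a_1\cdots a_m)=0$ whenever $a_j\in\mathcal A_{k_j}$, $k_j\ne k_{j+1}$, $\tilde\phi(a_j)=0$), and $X\mapsto X^{(k)}$ is the inclusion of the $k$-th copy. For $X_1,\dots,X_n\in\mathcal A$ and a partition $\pi$ of $[n]$, $\phi^{\mathcal F}_\pi(X_1,\dots,X_n)=\tilde\phi(X_1^{(i_1)}\cdots X_n^{(i_n)})$ for any indices $i_1,\dots,i_n$ with $i_j=i_l\iff j,l$ in the same block of $\pi$. $K^{\mathcal F}_\pi=\sum_{\sigma\le\pi}\phi^{\mathcal F}_\sigma\,\mu(\sigma,\pi)$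 with $\mu$ the Möbius function of the set-partition lattice $\Pi_n$ under refinement, and $K^{\mathcal F}_m(Y_1,\dots,Y_m)=K^{\mathcal F}_{\hat1_m}(Y_1,\dots,Y_m)$ for the one-block partition. A partition $\pi$ is noncrossing if there are no $i<j<k<l$ with $i,k$ in one block and $j,l$ in a different block; $NC_n$ is the set of noncrossing partitions of $[n]$. *)

From HB Require Import structures.
From mathcomp Require Import all_boot all_order all_algebra.
From mathcomp Require Import reals complex.
Set Implicit Arguments.
Unset Strict Implicit.
Unset Printing Implicit Defensive.
Import Order.TTheory GRing.Theory Num.Theory.
Local Open Scope ring_scope.

Definition setpart (n : nat) :=
  {P : {set {set 'I_n}} | partition P [set: 'I_n]}.

Definition refines n (s t : {set {set 'I_n}}) : bool :=
  [forall B in s, exists C in t, B \subset C].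

Definition noncrossing n (P : {set {set 'I_n}}) : bool :=
  [forall B in P, forall C in P, (B != C) ==>
    [forall i : 'I_n, forall j : 'I_n, forall k : 'I_n, forall l : 'I_n,
      ~~ [&& (i < j)%N, (j < k)%N, (k < l)%N, i \in B, k \in B, j \in C & l \in C]]].

Definition zeta_mx (C : comUnitRingType) n : 'M[C]_#|{: setpart n}| :=
  \matrix_(i, j) (refines (val (enum_val i)) (val (enum_val j)))%:R.

Definition mobius (C : comUnitRingType) n (s t : setpart n) : C :=
  invmx (zeta_mx C n) (enum_rank s) (enum_rank t).

Definition one_block_set m : {set {set 'I_m}} :=
  if m is 0 then set0 else [set [set: 'I_m]].

Lemma one_block_partition m : partition (one_block_set m) [set: 'I_m].
Proof.
case: m => [|m] /=.
  apply/and3P; split.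
  - by apply/eqP/setP => -[].
  - by apply/trivIsetP => A B; rewrite inE.
  - by rewrite inE.
apply/and3P; split.
- by rewrite /cover big_set1.
- exact: trivIset1.
- rewrite inE eq_sym; apply/set0Pn; exists ord0; by rewrite inE.
Qed.

Definition one_block m : setpart m := exist (fun P : {set {set 'I_m}} => partition P [set: 'I_m]) (one_block_set m) (one_block_partition m).

(* These are exactly the properties that characterize the free product    *)
(* functional tilde-phi on the words in the copies A_k.                   *)

Record free_exch_system (C : fieldType) (A : algType C) (phi : {scalar A}) :=
  FreeExchSystem {
    fes_U : algType C;
    fes_psi : {scalar fes_U};
    fes_iota : nat -> {lrmorphism A -> fes_U};
    fes_psi1 : fes_psi 1 = 1;
    fes_restr : forall k a, fes_psi (fes_iota k a) = phi a;
    fes_free : forall s : seq (nat * A),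
      (0 < size s)%N ->
      sorted (fun p q => p.1 != q.1) s ->
      all (fun p => phi p.2 == 0) s ->
      fes_psi (\prod_(p <- s) fes_iota p.1 p.2) = 0
  }.

(* phi^F_pi(X_1..X_n) = tilde-phi(X_1^(i_1) ... X_n^(i_n)), with the
   canonical choice i_j := position of the block of j in enum pi
   (so i_j = i_l iff j, l lie in the same block of pi). *)
Definition phiF (C : fieldType) (A : algType C) (phi : {scalar A})
    (F : free_exch_system phi) n (P : {set {set 'I_n}}) (X : 'I_n -> A) : C :=
  fes_psi F (\prod_(j < n) fes_iota F (index (pblock P j) (enum P)) (X j)).

Definition KF (C : fieldType) (A : algType C) (phi : {scalar A})
    (F : free_exch_system phi) n (P : setpart n) (X : 'I_n -> A) : C :=
  \sum_(s : setpart n | refines (val s) (val P))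
     phiF F (val s) X * mobius C s P.

Definition KFm (C : fieldType) (A : algType C) (phi : {scalar A})
    (F : free_exch_system phi) m (Y : 'I_m -> A) : C :=
  KF F (one_block m) Y.

Definition restr_block (T : Type) n (B : {set 'I_n}) (X : 'I_n -> T)
  : 'I_#|B| -> T := fun j => X (enum_val j).
Arguments restr_block {T n} B X _.

(* Freeness makes the state on a word in the copies insensitive to how the copies
   are labelled, and lets a segment whose copies occur nowhere else in the word
   factor out: centring a letter (a = phi a + (a - phi a)), merging adjacent
   letters from the same copy, and finally applying freeness to an alternating
   word of centred letters reduce both sides to the same terms.  For a
   noncrossing pi some block is an interval of the word, so peeling off such
   blocks one at a time factors phi^F_sigma over the blocks of pi for every
   sigma <= pi.  Since [0, pi] is the product of the partition lattices of the
   blocks of pi, the Moebius function mu(sigma, pi) factors in the same way (both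
   sides solve zeta * mu = delta), and the sum defining K^F_pi splits into the
   product of the cumulants of the blocks. *)

From HB Require Import structures.
From mathcomp Require Import all_boot all_order all_algebra.
From mathcomp Require Import reals complex.
From mathcomp Require Import zify.

Set Implicit Arguments.
Unset Strict Implicit.
Unset Printing Implicit Defensive.
Import GRing.Theory.
Local Open Scope ring_scope.

(** * Sequences *)

Lemma filter_eq_nil (T : Type) (a : pred T) s : all (predC a) s -> filter a s = [::].
Proof. by elim: s => //= x s IH /andP[/negPf-> /IH]. Qed.

Lemma subseq_cons_notin (T : eqType) (x : T) t s1 s2 :
  x \notin s1 -> subseq (x :: t) (s1 ++ s2) = subseq (x :: t) s2.
Proof. by elim: s1 => //= y s1 IH; rewrite in_cons negb_or eq_sym => /andP[/negbTE-> /IH]. Qed.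

(* The [true] entries of [m] are consecutive. *)
Definition interval_mask (m : bitseq) := ~~ subseq [:: true; false; true] m.

Lemma interval_mask_subseq m m' : subseq m' m -> interval_mask m -> interval_mask m'.
Proof. by move=> m'm; apply: contra => /subseq_trans; apply. Qed.

Lemma interval_mask_cat m1 m2 m3 : true \notin m1 -> false \notin m2 -> true \notin m3 ->
  interval_mask (m1 ++ m2 ++ m3).
Proof.
have no_true m : true \notin m -> interval_mask m.
  by apply: contra => /mem_subseq; apply; rewrite mem_head.
move=> t1 f2 t3; rewrite /interval_mask subseq_cons_notin //.
case: m2 f2 => [_|b m2]; first exact: no_true t3.
rewrite in_cons negb_or => /andP[]; case: b => //= _ f2.
by rewrite subseq_cons_notin //; apply: contra t3 => /mem_subseq; apply; rewrite !inE.
Qed.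

Lemma sorted_filter_interval_mask (T : eqType) (r : rel T) (P : pred T) s :
  interval_mask (map P s) -> sorted r s -> sorted r (filter P s).
Proof.
rewrite /interval_mask; elim: s => //= x s IH.
case: (P x) => /= nsub xs; last exact: IH nsub (path_sorted xs).
case: s xs nsub IH => //= y s /andP[xy ys]; case: (P y) => /= nsub IH.
  by rewrite xy IH.
suff -> : filter P s = [::] by [].
apply/eqP; rewrite -[_ == _]negbK -has_filter; apply: contra nsub => /hasP[z zs Pz].
by rewrite sub1seq; apply/mapP; exists z.
Qed.

Lemma subseq_map_inv (T1 T2 : eqType) (g : T1 -> T2) t s :
  subseq t (map g s) -> exists2 s', subseq s' s & t = map g s'.
Proof.
elim: s t => [|x s IH] [|y t] //=; try by exists [::]; rewrite ?sub0seq.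
case: eqP => [-> /IH[s' ss' ->]|_ /IH[s' ss' ->]]; first by exists (x :: s'); rewrite //= eqxx.
by exists s' => //; apply: subseq_trans ss' (subseq_cons _ _).
Qed.

Definition noncrossing_seq (t : seq nat) :=
  forall a b, a != b -> ~~ subseq [:: a; b; a; b] t.

Lemma noncrossing_seq_subseq t t' :
  subseq t' t -> noncrossing_seq t -> noncrossing_seq t'.
Proof. by move=> t't nct a b /nct; apply: contra => /subseq_trans; apply. Qed.

Section IsolatedRun.
Variables (T : eqType) (g : T -> nat).

Definition isolated_run (s : seq T) :=
  exists c s1 s2 s3, [/\ s = s1 ++ s2 ++ s3, s2 != [::], all (fun x => g x == c) s2,
                        c \notin map g s1 & c \notin map g s3].

Lemma isolated_run_cons_same x y r :
  g x = g y -> isolated_run (y :: r) -> isolated_run (x :: y :: r).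
Proof.
move=> gxy [c [[|w s1] [s2 [s3 [/= E ne al n1 n3]]]]].
  case: s2 E ne al => [|y' s2] //= [<- ->] _ al.
  exists c, [::], [:: x, y & s2], s3; split => //=.
  by move: al; rewrite gxy => /andP[-> ->].
case: E => ?; subst w => ->; exists c, [:: x, y & s1], s2, s3; split => //=.
by move: n1; rewrite !in_cons gxy orbA orbb.
Qed.

Lemma isolated_run_cons_nested x m y r :
  g y = g x -> g x \notin map g m -> noncrossing_seq (map g (x :: m ++ y :: r)) ->
  isolated_run m -> isolated_run (x :: m ++ y :: r).
Proof.
move=> gyx nxm nc [c [s1 [[|w s2] [s3 [E // _ al n1 n3]]]]].
have cw : g w = c by move: al => /= /andP[/eqP].
have wm : w \in m by rewrite E !mem_cat mem_head orbT.
have cx : c != g x by rewrite -cw; apply: contraNneq nxm => <-; apply: map_f.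
exists c, (x :: s1), (w :: s2), (s3 ++ y :: r); split => //=.
- by rewrite E -!catA.
- by rewrite in_cons negb_or cx.
rewrite map_cat mem_cat negb_or n3 /= in_cons gyx negb_or cx /=.
have xc : g x != c by rewrite eq_sym.
apply: contraTN (nc _ _ xc) => cr; rewrite negbK /= eqxx map_cat -cat1s.
apply: cat_subseq; first by rewrite sub1seq -cw map_f.
by rewrite /= gyx eqxx sub1seq.
Qed.

Lemma noncrossing_isolated_run s :
  s != [::] -> noncrossing_seq (map g s) -> isolated_run s.
Proof.
have [N] := ubnP (size s); elim: N s => // N IH [//|x r] /= /ltnSE le_rN _ nc.
have [xr|xr] := boolP (has (fun z => g z == g x) r); last first.
  exists (g x), [::], [:: x], r; split; rewrite //= ?eqxx //.
  by rewrite -has_pred1 has_map.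
move: le_rN nc; case/(split_find_nth x): xr => y m r' /eqP gyx nxm.
rewrite cat_rcons; case: m nxm => [|z m] nxm /= le_rN nc.
  apply: isolated_run_cons_same (esym gyx) _; apply: IH => //.
  by apply: noncrossing_seq_subseq nc; apply: subseq_cons.
apply: (@isolated_run_cons_nested x (z :: m) y r') => //; first by rewrite -has_pred1 has_map.
apply: IH => //; first by move: le_rN; rewrite /= size_cat /=; lia.
apply: noncrossing_seq_subseq nc; apply: subseq_trans (subseq_cons _ (g x)).
by rewrite map_cat -cat_cons prefix_subseq.
Qed.

End IsolatedRun.

(** * Words in the free product *)

Section FreeWords.
Variables (C : fieldType) (A : algType C) (phi : {scalar A}).
Hypothesis phi1 : phi 1 = 1.
Variable F : free_exch_system phi.
Local Notation psi := (fes_psi F).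
Local Notation iota := (fes_iota F).

(* The letter [(k, a)] is the element [a] in the [k]-th copy of [A]. *)
Definition word (s : seq (nat * A)) : fes_U F := \prod_(p <- s) iota p.1 p.2.

Lemma psi_word_nil : psi (word [::]) = 1.
Proof. by rewrite /word big_nil fes_psi1. Qed.

Lemma word_cat s1 s2 : word (s1 ++ s2) = word s1 * word s2.
Proof. exact: big_cat. Qed.

Lemma word_cons p s : word (p :: s) = iota p.1 p.2 * word s.
Proof. exact: big_cons. Qed.

Lemma word_merge s1 k a b s2 :
  word (s1 ++ (k, a) :: (k, b) :: s2) = word (s1 ++ (k, a * b) :: s2).
Proof. by rewrite !word_cat !word_cons /= rmorphM !mulrA. Qed.

Definition centre (a : A) := a - phi a *: 1.

Lemma phi_centre a : phi (centre a) = 0.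
Proof. by rewrite linearB linearZ /= phi1 mulr1 subrr. Qed.

Lemma psi_word_centre s1 k a s2 : psi (word (s1 ++ (k, a) :: s2)) =
  phi a * psi (word (s1 ++ s2)) + psi (word (s1 ++ (k, centre a) :: s2)).
Proof.
rewrite !word_cat !word_cons /= /centre linearB linearZ /= rmorph1.
rewrite mulrBl mulrBr -scalerAl mul1r -scalerAr linearB linearZ /=.
by rewrite addrC subrK.
Qed.

Definition centred (p : nat * A) := phi p.2 == 0.
Definition alternating (s : seq (nat * A)) := sorted (fun p q => p.1 != q.1) s.

Lemma psi_word_free s : s != [::] -> alternating s -> all centred s -> psi (word s) = 0.
Proof. by case: s => // p s _; apply: fes_free. Qed.

Lemma split_not_centred s : ~~ all centred s ->
  exists s1 k a s2, s = s1 ++ (k, a) :: s2 /\ phi a != 0.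
Proof. by case/allPn => -[k a] /splitPr[s1 s2] nz; exists s1, k, a, s2. Qed.

Lemma split_not_alternating s : ~~ alternating s ->
  exists s1 k a b s2, s = s1 ++ (k, a) :: (k, b) :: s2.
Proof.
elim: s => [|[k a] [|[k' b] s] IH] //=; rewrite negb_and negbK => /orP[/eqP/= <-|].
  by exists [::], k, a, b, s.
by case/IH => [s1 [k1 [a1 [b1 [s2 ->]]]]]; exists ((k, a) :: s1), k1, a1, b1, s2.
Qed.

Definition word_measure (s : seq (nat * A)) := (2 * size s + count (predC centred) s)%N.

Lemma word_measure_centre s1 k a s2 : phi a != 0 ->
  (word_measure (s1 ++ s2) < word_measure (s1 ++ (k, a) :: s2))%N /\
  (word_measure (s1 ++ (k, centre a) :: s2) < word_measure (s1 ++ (k, a) :: s2))%N.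
Proof.
by rewrite /word_measure !size_cat !count_cat /= /centred phi_centre eqxx => /negbTE->; lia.
Qed.

Lemma word_measure_merge s1 k a b s2 : centred (k, a) ->
  (word_measure (s1 ++ (k, (a * b)%R) :: s2) < word_measure (s1 ++ (k, a) :: (k, b) :: s2))%N.
Proof. by rewrite /word_measure !size_cat !count_cat /= => ->; lia. Qed.

Definition label_in (U : {pred nat}) (p : nat * A) := p.1 \in U.
Definition relabel (f : nat -> nat) (s : seq (nat * A)) := [seq (f p.1, p.2) | p <- s].

Lemma relabel_id s : relabel id s = s.
Proof. by elim: s => //= -[k a] s ->. Qed.

Section Factorization.
Variables (f : nat -> nat) (U : {pred nat}).
Hypothesis f_inj : {in U &, injective f}.

(* Carrying the relabelling [f] along shows at the same time that only the
   pattern of equal labels matters (psi_word_relabel). *)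
Definition factorizes s := psi (word s) =
  psi (word (relabel f (filter (label_in U) s))) * psi (word (filter (predC (label_in U)) s)).

Lemma factorizes_centre s1 k a s2 : factorizes (s1 ++ s2) ->
  factorizes (s1 ++ (k, centre a) :: s2) -> factorizes (s1 ++ (k, a) :: s2).
Proof.
rewrite /factorizes psi_word_centre => -> ->; rewrite !filter_cat /= /label_in /=.
case: (k \in U) => /=; last by rewrite (psi_word_centre _ k a) mulrDr mulrCA.
by rewrite /relabel !map_cat /= (psi_word_centre _ (f k) a) mulrDl mulrA.
Qed.

Lemma factorizes_merge s1 k a b s2 :
  factorizes (s1 ++ (k, a * b) :: s2) -> factorizes (s1 ++ (k, a) :: (k, b) :: s2).
Proof.
rewrite /factorizes word_merge => ->; rewrite !filter_cat /= /label_in /=.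
by case: (k \in U); rewrite /= /relabel !map_cat /= word_merge.
Qed.

Lemma factorizes_free s :
  interval_mask (map (label_in U) s) -> alternating s -> all centred s -> factorizes s.
Proof.
move=> sU alt cen; rewrite /factorizes.
case E: (filter (label_in U) s) => [|p u].
  by rewrite psi_word_nil mul1r (all_filterP _) // all_predC has_filter E.
have s_nil : s != [::] by case: s E {sU alt cen}.
rewrite psi_word_free // psi_word_free ?mul0r // -E /relabel.
- rewrite /alternating sorted_map.
  apply: sub_in_sorted (filter_all _ _) (sorted_filter_interval_mask sU alt).
  by move=> q r qU rU /=; apply: contra => /eqP/(f_inj qU rU)->.
- by rewrite all_map all_filter; apply: sub_all cen => q cq; apply/implyP.
Qed.

Lemma factorizes_interval s : interval_mask (map (label_in U) s) -> factorizes s.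
Proof.
have [N] := ubnP (word_measure s); elim: N s => // N IH s /ltnSE le_sN sU.
have [cen|/split_not_centred[s1 [k [a [s2 [Es nz]]]]]] := boolP (all centred s); last first.
  rewrite Es in le_sN sU *; have [lt1 lt2] := word_measure_centre s1 k s2 nz.
  apply: factorizes_centre; apply: IH; rewrite ?(leq_trans _ le_sN) //.
    by apply: interval_mask_subseq _ sU; rewrite !map_cat cat_subseq // subseq_cons.
  by apply: interval_mask_subseq _ sU; rewrite !map_cat.
have [alt|/split_not_alternating[s1 [k [a [b [s2 Es]]]]]] := boolP (alternating s).
  exact: factorizes_free.
move: cen sU le_sN; rewrite Es all_cat /= => /andP[_ /andP[ca _]] sU le_sN.
apply: factorizes_merge; apply: IH; first exact: leq_trans (word_measure_merge s1 b s2 ca) le_sN.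
apply: interval_mask_subseq _ sU; rewrite !map_cat !map_cons cat_subseq // -cat1s.
exact: cat_subseq (subseq_refl [:: label_in U (k, a)]) (subseq_cons _ _).
Qed.

End Factorization.

Lemma psi_word_factor f w1 u w2 : {in unzip1 u &, injective f} ->
  {in unzip1 u, forall k, k \notin unzip1 (w1 ++ w2)} ->
  psi (word (w1 ++ u ++ w2)) = psi (word (relabel f u)) * psi (word (w1 ++ w2)).
Proof.
move=> f_inj disj; pose U := [in unzip1 u].
have inU : all (label_in U) u by apply/allP => p pu; apply: map_f.
have outU : all (predC (label_in U)) (w1 ++ w2).
  by apply/allP => p pw /=; apply/negP => /disj; rewrite (map_f fst pw).
move: (outU); rewrite all_cat => /andP[out1 out2].
rewrite (@factorizes_interval f U) //; last first.
  rewrite !map_cat; apply: interval_mask_cat.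
  - by apply/mapP => -[p /(allP out1)/negPf->].
  - by apply/mapP => -[p /(allP inU)->].
  - by apply/mapP => -[p /(allP out2)/negPf->].
have -> : filter (label_in U) (w1 ++ u ++ w2) = u.
  by rewrite !filter_cat (all_filterP inU) !filter_eq_nil // cats0.
rewrite !filter_cat (all_filterP out1) (all_filterP out2) filter_eq_nil //.
by apply: sub_all inU => p /= ->.
Qed.

Lemma psi_word_relabel f u : {in unzip1 u &, injective f} ->
  psi (word u) = psi (word (relabel f u)).
Proof.
move=> f_inj; have := @psi_word_factor f [::] u [::] f_inj.
by rewrite cat0s cats0 psi_word_nil mulr1; apply=> k; rewrite in_nil.
Qed.

Definition letters (T : Type) (lab : T -> nat) (Y : T -> A) (e : seq T) : seq (nat * A) :=
  [seq (lab j, Y j) | j <- e].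

Lemma psi_letters_pattern (T : eqType) (lab1 lab2 : T -> nat) (Y : T -> A) e :
  {in e &, forall j k, (lab1 j == lab1 k) = (lab2 j == lab2 k)} ->
  psi (word (letters lab1 Y e)) = psi (word (letters lab2 Y e)).
Proof.
case: e => [//|j0 e'] same; set e := j0 :: e' in same *.
pose f x := lab2 (nth j0 e (find (fun j => lab1 j == x) e)).
have fE j : j \in e -> f (lab1 j) = lab2 j.
  move=> je; have hasj : has (fun k => lab1 k == lab1 j) e by apply/hasP; exists j.
  have /eqP Ej := nth_find j0 hasj.
  by apply/eqP; rewrite -same ?Ej // mem_nth -?has_find.
rewrite (psi_word_relabel (f := f)).
  by rewrite /relabel -map_comp; congr (psi (word _)); apply/eq_in_map => j /fE /= ->.
move=> _ _ /mapP[_ /mapP[j je ->] ->] /mapP[_ /mapP[k ke ->] ->] /=.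
by rewrite !fE // => /eqP; rewrite -same // => /eqP.
Qed.

Section Blocks.
Variables (T : eqType) (lab grp : T -> nat) (Y : T -> A).

Lemma psi_letters_isolated_run s1 s2 s3 c :
  {in s1 ++ s2 ++ s3 &, forall j k, lab j = lab k -> grp j = grp k} ->
  all (fun j => grp j == c) s2 -> c \notin map grp (s1 ++ s3) ->
  psi (word (letters lab Y (s1 ++ s2 ++ s3))) =
  psi (word (letters lab Y s2)) * psi (word (letters lab Y (s1 ++ s3))).
Proof.
move=> lab_grp s2c c_out; rewrite /letters !map_cat (psi_word_factor (f := id)) ?relabel_id //.
move=> _ /mapP[_ /mapP[j js2 ->] ->] /=; rewrite -map_cat.
apply/mapP => -[_ /mapP[k ks13 ->] /= jk]; case/negP: c_out.
rewrite -(eqP (allP s2c j js2)) (lab_grp j k) ?map_f //; first by rewrite !mem_cat js2 orbT.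
by move: ks13; rewrite !mem_cat => /orP[]->; rewrite ?orbT.
Qed.

Lemma psi_letters_blocks e cs :
  {in e &, forall j k, lab j = lab k -> grp j = grp k} ->
  noncrossing_seq (map grp e) -> uniq cs -> {subset map grp e <= cs} ->
  psi (word (letters lab Y e)) =
  \prod_(c <- cs) psi (word (letters lab Y [seq j <- e | grp j == c])).
Proof.
have [N] := ubnP (size e); elim: N e => // N IH e /ltnSE le_eN lab_grp nc uniq_cs e_cs.
have [->|e_nil] := eqVneq e [::].
  by rewrite psi_word_nil big1_seq // => c _; rewrite psi_word_nil.
have [c [s1 [s2 [s3 [Ee s2_nil s2c c1 c3]]]]] := noncrossing_isolated_run e_nil nc.
have filter_out d s : d \notin map grp s -> [seq j <- s | grp j == d] = [::].
  move=> ds; apply: filter_eq_nil; apply/allP => j js /=.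
  by apply: contraNneq ds => <-; apply: map_f.
have c_cs : c \in cs.
  case: s2 s2_nil s2c Ee => // j s2' _ /andP[/eqP <- _] Ee.
  by apply: e_cs; rewrite Ee map_f // !mem_cat mem_head orbT.
have sub13 : {subset s1 ++ s3 <= e} by move=> j; rewrite Ee !mem_cat => /orP[]->; rewrite ?orbT.
rewrite Ee (psi_letters_isolated_run (c := c)) -?Ee //; last first.
  by rewrite map_cat mem_cat negb_or c1 c3.
rewrite (IH (s1 ++ s3)) //.
- rewrite Ee [RHS](bigD1_seq c) //= !filter_cat (filter_out c s1) // (filter_out c s3) //.
  rewrite (all_filterP s2c) cats0 (bigD1_seq c) //= filter_cat.
  rewrite (filter_out c s1) // (filter_out c s3) // psi_word_nil mul1r.
  congr (_ * _); apply: eq_bigr => d cd; rewrite !filter_cat (@filter_out d s2) //.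
  by apply: contra cd => /mapP[j /(allP s2c)/eqP-> ->].
- have := s2_nil; rewrite -size_eq0 -lt0n => ?.
  by move: le_eN; rewrite Ee !size_cat; lia.
- by move=> j k /sub13 ? /sub13 ?; apply: lab_grp.
- apply: noncrossing_seq_subseq nc; rewrite Ee; apply: map_subseq.
  exact: cat_subseq (subseq_refl s1) (suffix_subseq s2 s3).
- by move=> d /mapP[j /sub13 je ->]; apply: e_cs; apply: map_f.
Qed.

End Blocks.

End FreeWords.

(** * Set partitions *)

Lemma trivIset_blocks_eq (T : finType) (P : {set {set T}}) B B' x :
  trivIset P -> B \in P -> B' \in P -> x \in B -> x \in B' -> B = B'.
Proof. by move=> tP BP B'P xB xB'; rewrite -(def_pblock tP BP xB) (def_pblock tP B'P xB'). Qed.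

Lemma partition_block_witness (T : finType) (P : {set {set T}}) D B :
  partition P D -> B \in P -> exists x, x \in B.
Proof. by move=> pP /(partition_neq0 pP)/set0Pn. Qed.

Section Refinement.
Variable n : nat.
Implicit Types (P Q S : {set {set 'I_n}}) (B C D : {set 'I_n}).

Lemma refinesP S Q :
  reflect (forall C, C \in S -> exists2 D, D \in Q & C \subset D) (refines S Q).
Proof.
apply: (iffP forall_inP) => SQ C /SQ; first by move/exists_inP.
by move=> ?; apply/exists_inP.
Qed.

Lemma refines_refl S : refines S S.
Proof. by apply/refinesP => C CS; exists C. Qed.

Lemma refines_trans S1 S2 S3 : refines S1 S2 -> refines S2 S3 -> refines S1 S3.
Proof.
move=> /refinesP S12 /refinesP S23; apply/refinesP => C /S12[D /S23[E ES DE] CD].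
by exists E => //; apply: subset_trans CD DE.
Qed.

Definition restr_part S B := [set C in S | C \subset B].

Lemma mem_restr_part S B C : (C \in restr_part S B) = (C \in S) && (C \subset B).
Proof. by rewrite inE. Qed.

Section RestrPart.
Variables P S : {set {set 'I_n}}.
Hypotheses (pP : partition P setT) (pS : partition S setT) (SP : refines S P).

Lemma pblock_restr_part_mem B x : B \in P -> x \in B -> pblock S x \in restr_part S B.
Proof.
move=> BP xB; have xS : x \in cover S by rewrite (cover_partition pS).
rewrite mem_restr_part pblock_mem //=.
have [D DP CD] := refinesP _ _ SP _ (pblock_mem xS).
have xD : x \in D by apply: (subsetP CD); rewrite mem_pblock.
by rewrite -(trivIset_blocks_eq (partition_trivIset pP) BP DP xB xD) in CD.
Qed.

Lemma restr_part_partition B : B \in P -> partition (restr_part S B) B.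
Proof.
move=> BP; apply/and3P; split.
- apply/eqP/setP => x; apply/bigcupP/idP => [[C]|xB].
    by rewrite mem_restr_part => /andP[_ /subsetP]; apply.
  exists (pblock S x); first exact: pblock_restr_part_mem.
  by rewrite mem_pblock (cover_partition pS).
- apply: trivIsetS (partition_trivIset pS).
  by apply/subsetP => C; rewrite mem_restr_part => /andP[].
- by rewrite mem_restr_part (partition0 pS).
Qed.

Lemma pblock_restr_part B x : B \in P -> x \in B -> pblock (restr_part S B) x = pblock S x.
Proof.
move=> BP xB; apply: def_pblock (pblock_restr_part_mem BP xB) _.
  exact: partition_trivIset (restr_part_partition BP).
by rewrite mem_pblock (cover_partition pS).
Qed.

Lemma eq_restr_part_set1 : (S == P) = [forall B in P, restr_part S B == [set B]].
Proof.
apply/eqP/forall_inP => [->|SB].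
  move=> B BP; apply/eqP/setP => C; rewrite mem_restr_part in_set1.
  apply/andP/eqP => [[CP CB]|->]; last by rewrite BP subxx.
  have [x xC] := partition_block_witness pP CP.
  exact: trivIset_blocks_eq (partition_trivIset pP) CP BP xC (subsetP CB _ xC).
apply/setP => C; apply/idP/idP => [CS|CP].
  have [B BP CB] := refinesP _ _ SP _ CS.
  by move: (SB B BP) => /eqP/setP/(_ C); rewrite mem_restr_part CS CB in_set1 => /esym/eqP->.
by move: (SB C CP) => /eqP/setP/(_ C); rewrite mem_restr_part in_set1 eqxx => /andP[].
Qed.

End RestrPart.

Lemma refines_restr_part P S1 S2 : partition P setT -> partition S1 setT ->
  refines S1 P -> refines S2 P ->
  refines S1 S2 = [forall B in P, refines (restr_part S1 B) (restr_part S2 B)].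
Proof.
move=> pP pS1 S1P S2P; apply/idP/forall_inP => [/refinesP S12 B BP|S12].
  apply/refinesP => C; rewrite mem_restr_part => /andP[CS CB].
  have [D DS CD] := S12 _ CS; exists D => //; rewrite mem_restr_part DS /=.
  have [E EP DE] := refinesP _ _ S2P _ DS.
  have [x xC] := partition_block_witness pS1 CS.
  rewrite (trivIset_blocks_eq (partition_trivIset pP) BP EP (subsetP CB _ xC)) //.
  exact: subsetP (subset_trans CD DE) _ xC.
apply/refinesP => C CS; have [B BP CB] := refinesP _ _ S1P _ CS.
have [|D] := refinesP _ _ (S12 B BP) C; first by rewrite mem_restr_part CS CB.
by rewrite mem_restr_part => /andP[DS _] CD; exists D.
Qed.

End Refinement.

Lemma one_block_setE m : (0 < m)%N -> one_block_set m = [set setT].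
Proof. by case: m. Qed.

Lemma refines_one_block m (S : {set {set 'I_m}}) : (0 < m)%N -> refines S (one_block_set m).
Proof. by move/one_block_setE->; apply/refinesP => C _; exists setT; rewrite ?set11 ?subsetT. Qed.

Lemma card_block_gt0 n (P : {set {set 'I_n}}) B : partition P setT -> B \in P -> (0 < #|B|)%N.
Proof. by move=> pP BP; rewrite card_gt0; apply: partition_neq0 pP BP. Qed.

Section BlockRelabel.
Variables (n : nat) (B : {set 'I_n}).
Local Notation ev := (enum_val : 'I_#|B| -> 'I_n).
Implicit Types (Q : {set {set 'I_n}}) (S : {set {set 'I_#|B|}}).

Lemma ev_onto x : x \in B -> exists j, ev j = x.
Proof. by move=> xB; exists (enum_rank_in xB x); rewrite enum_rankK_in. Qed.

Lemma imset_preim_ev (C : {set 'I_n}) : C \subset B -> ev @: (ev @^-1: C) = C.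
Proof.
move=> CB; apply/setP => x; apply/imsetP/idP => [[j]|xC]; first by rewrite inE => jC ->.
by have [j ej] := ev_onto (subsetP CB _ xC); exists j; rewrite // inE ej.
Qed.

Lemma preim_imset_ev (D : {set 'I_#|B|}) : ev @^-1: (ev @: D) = D.
Proof. by apply/setP => j; rewrite inE mem_imset //; apply: enum_val_inj. Qed.

Lemma imsetT_ev : ev @: setT = B.
Proof.
apply/setP => x; apply/imsetP/idP => [[j _ ->]|/ev_onto[j <-]]; first exact: enum_valP.
by exists j.
Qed.

Lemma map_ev_enum : [seq ev j | j <- enum 'I_#|B|] = enum B.
Proof.
case: (pickP (mem B)) => [x0 x0B|B0].
  rewrite (eq_map (enum_val_nth x0)).
  have -> : (fun j : 'I_#|B| => nth x0 (enum B) j) = nth x0 (enum B) \o val by [].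
  by rewrite map_comp val_enum_ord cardE -/(mkseq _ _) mkseq_nth.
have cardB : #|B| = 0 by apply: eq_card0 => x; apply: B0.
have -> : enum B = [::] by apply/nilP; rewrite /nilp -cardE cardB.
by apply/nilP; rewrite /nilp size_map size_enum_ord cardB.
Qed.

Definition preim_part Q : {set {set 'I_#|B|}} := [set ev @^-1: C | C : {set 'I_n} in Q].
Definition im_part S : {set {set 'I_n}} := [set ev @: D | D : {set 'I_#|B|} in S].

Lemma im_preim_part Q : partition Q B -> im_part (preim_part Q) = Q.
Proof.
move=> pQ; rewrite /im_part /preim_part -imset_comp; apply/setP => C.
apply/imsetP/idP => [[C' C'Q ->] /=|CQ]; first by rewrite imset_preim_ev // (partitionS pQ).
by exists C => //=; rewrite imset_preim_ev // (partitionS pQ).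
Qed.

Lemma preim_im_part S : preim_part (im_part S) = S.
Proof.
rewrite /im_part /preim_part -imset_comp; apply/setP => D.
apply/imsetP/idP => [[D' D'S ->] /=|DS]; first by rewrite preim_imset_ev.
by exists D => //=; rewrite preim_imset_ev.
Qed.

Lemma im_part_partition S : partition S setT -> partition (im_part S) B.
Proof. by have := imset_partition S setT (@enum_val_inj _ (mem B)); rewrite imsetT_ev => ->. Qed.

Lemma preim_part_partition Q : partition Q B -> partition (preim_part Q) setT.
Proof.
move=> pQ; rewrite -(imset_partition (preim_part Q) setT enum_val_inj) imsetT_ev.
by rewrite -/(im_part _) im_preim_part.
Qed.

Lemma refines_preim_part Q1 Q2 : partition Q1 B -> partition Q2 B ->
  refines (preim_part Q1) (preim_part Q2) = refines Q1 Q2.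
Proof.
move=> pQ1 pQ2; apply/refinesP/refinesP => Q12 C CQ.
  have [_ /imsetP[D DQ ->] CD] := Q12 _ (imset_f _ CQ).
  exists D => //; rewrite -(imset_preim_ev (partitionS pQ1 CQ)).
  by rewrite -(imset_preim_ev (partitionS pQ2 DQ)) imsetS.
case/imsetP: CQ => C' C'Q ->; have [D DQ CD] := Q12 _ C'Q.
by exists (ev @^-1: D); [apply: imset_f | apply: preimsetS].
Qed.

Lemma preim_part_eq_set1 Q : partition Q B ->
  (preim_part Q == [set setT]) = (Q == [set B]).
Proof.
move=> pQ; apply/eqP/eqP => [QT|->].
  by rewrite -(im_preim_part pQ) QT /im_part imset_set1 imsetT_ev.
by rewrite /preim_part imset_set1; congr [set _]; apply/setP => j; rewrite !inE enum_valP.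
Qed.

Lemma pblock_preim_part Q j : partition Q B ->
  pblock (preim_part Q) j = ev @^-1: pblock Q (ev j).
Proof.
move=> pQ; have evQ : ev j \in cover Q by rewrite (cover_partition pQ) enum_valP.
apply: def_pblock; first exact: partition_trivIset (preim_part_partition pQ).
  by apply: imset_f; apply: pblock_mem.
by rewrite inE mem_pblock.
Qed.

End BlockRelabel.
Arguments preim_part {n} B Q.
Arguments im_part {n} B S.

Definition to_setpart m (S : {set {set 'I_m}}) : setpart m := insubd (one_block m) S.

Lemma to_setpartK m (S : {set {set 'I_m}}) : partition S setT -> val (to_setpart S) = S.
Proof. by move=> pS; rewrite /to_setpart insubdK. Qed.

Lemma to_setpart_val m (s : setpart m) : to_setpart (val s) = s.
Proof. exact: valKd. Qed.

Lemma sum_setpart_block (R : nmodType) n (B : {set 'I_n}) (G : setpart #|B| -> R) :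
  \sum_(s : setpart #|B|) G s = \sum_(Q | partition Q B) G (to_setpart (preim_part B Q)).
Proof.
rewrite (reindex_onto (fun s : setpart #|B| => im_part B (val s))
                      (fun Q => to_setpart (preim_part B Q))) /=; last first.
  by move=> Q pQ; rewrite to_setpartK ?im_preim_part ?preim_part_partition.
apply: eq_big => s; last by rewrite preim_im_part to_setpart_val.
by rewrite im_part_partition ?(valP s) // preim_im_part to_setpart_val eqxx.
Qed.

Section RefinementsOfPartition.
Variables (n : nat) (P : {set {set 'I_n}}).
Hypothesis pP : partition P setT.
Local Notation family := {ffun {set 'I_n} -> {set {set 'I_n}}}.
Local Notation block_partitions :=
  (pfamily set0 (mem P) (fun B (Q : {set {set 'I_n}}) => partition Q B)).

Definition restr_family (S : {set {set 'I_n}}) : family :=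
  [ffun B => if B \in P then restr_part S B else set0].

Definition glue (f : family) : {set {set 'I_n}} := \bigcup_(B in P) f B.

Lemma block_partitionsP (f : family) B :
  f \in block_partitions -> B \in P -> partition (f B) B.
Proof. by case/pfamilyP => _ fP /fP. Qed.

Lemma glue_partition (f : family) : f \in block_partitions -> partition (glue f) setT.
Proof.
move=> fP; apply/and3P; split.
- apply/eqP/setP => x; rewrite inE; apply/bigcupP.
  have BP : pblock P x \in P by rewrite pblock_mem // (cover_partition pP).
  have : x \in cover (f (pblock P x)).
    by rewrite (cover_partition (block_partitionsP fP BP)) mem_pblock (cover_partition pP).
  by case/bigcupP => C Cf xC; exists C => //; apply/bigcupP; exists (pblock P x).
- apply/trivIsetP => C1 C2 /bigcupP[B1 B1P C1f] /bigcupP[B2 B2P C2f] C12.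
  have [B12|B12] := eqVneq B1 B2; first subst B2.
    by move/trivIsetP: (partition_trivIset (block_partitionsP fP B1P)); apply.
  apply: (disjointW (partitionS (block_partitionsP fP B1P) C1f)
                    (partitionS (block_partitionsP fP B2P) C2f)).
  by move/trivIsetP: (partition_trivIset pP); apply.
- by apply/bigcupP => -[B BP]; rewrite (partition0 (block_partitionsP fP BP)).
Qed.

Lemma restr_family_glue (f : family) :
  f \in block_partitions -> restr_family (val (to_setpart (glue f))) = f.
Proof.
move=> fP; rewrite to_setpartK ?glue_partition //; apply/ffunP => B; rewrite ffunE.
case: ifP => BP; last first.
  case/pfamilyP: fP => /subsetP f_supp _; apply/eqP; apply: contraFT BP => fB.
  by apply: f_supp; rewrite unfold_in /= eq_sym.
apply/setP => C; rewrite mem_restr_part; apply/andP/idP => [[]|Cf].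
  case/bigcupP => B' B'P Cf CB; have pB' := block_partitionsP fP B'P.
  have [x xC] := partition_block_witness pB' Cf.
  by rewrite (trivIset_blocks_eq (partition_trivIset pP) BP B'P (subsetP CB _ xC))
             ?(subsetP (partitionS pB' Cf)).
by split; [apply/bigcupP; exists B | exact: partitionS (block_partitionsP fP BP) Cf].
Qed.

Lemma restr_familyP (s : setpart n) :
  (restr_family (val s) \in block_partitions) &&
  (to_setpart (glue (restr_family (val s))) == s) = refines (val s) P.
Proof.
have ps := valP s; apply/andP/idP => [[fP _]|sP].
  apply/refinesP => C Cs; have [x xC] := partition_block_witness ps Cs.
  have BP : pblock P x \in P by rewrite pblock_mem // (cover_partition pP).
  have := block_partitionsP fP BP; rewrite ffunE BP => pB.
  have : x \in cover (restr_part (val s) (pblock P x)).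
    by rewrite (cover_partition pB) mem_pblock (cover_partition pP).
  case/bigcupP => C'; rewrite mem_restr_part => /andP[C's C'B] xC'.
  by exists (pblock P x) => //; rewrite (trivIset_blocks_eq (partition_trivIset ps) Cs C's xC xC').
have glue_s : glue (restr_family (val s)) = val s.
  apply/setP => C; apply/bigcupP/idP => [[B BP]|Cs]; first by rewrite ffunE BP inE => /andP[].
  by have [B BP CB] := refinesP _ _ sP _ Cs; exists B; rewrite // ffunE BP inE Cs.
split; last by rewrite glue_s to_setpart_val.
apply/pfamilyP; split.
  by apply/subsetP => B; rewrite inE ffunE; case: ifP => // _; rewrite eqxx.
by move=> B BP; rewrite ffunE BP unfold_in; apply: (restr_part_partition pP ps sP).
Qed.

Lemma sum_refines_prod (R : comNzRingType) (G : {set 'I_n} -> {set {set 'I_n}} -> R) :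
  \sum_(s : setpart n | refines (val s) P) \prod_(B in P) G B (restr_part (val s) B) =
  \prod_(B in P) \sum_(Q | partition Q B) G B Q.
Proof.
rewrite (big_distr_big_dep set0) /= (reindex_onto (fun s : setpart n => restr_family (val s))
                                           (fun f => to_setpart (glue f))) /=; last first.
  exact: restr_family_glue.
apply: eq_big => [s|s _]; first exact: esym (restr_familyP s).
by apply: eq_bigr => B BP; rewrite ffunE BP.
Qed.

End RefinementsOfPartition.

(** * The Moebius function *)

Section Mobius.
Variable m : nat.
Implicit Types (S : {set {set 'I_m}}).

Definition same_block S := [set xy : 'I_m * 'I_m | pblock S xy.1 == pblock S xy.2].

Lemma pblock_same_block S x : partition S setT -> pblock S x = [set y | (x, y) \in same_block S].
Proof.
move=> pS; apply/setP => y; rewrite !inE /= eq_pblock ?(cover_partition pS) //.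
exact: partition_trivIset pS.
Qed.

Lemma same_block_sub S1 S2 : partition S1 setT -> partition S2 setT ->
  refines S1 S2 -> same_block S1 \subset same_block S2.
Proof.
move=> pS1 pS2 /refinesP S12; apply/subsetP => -[x y]; rewrite !inE /= => /eqP xy.
have x1 : x \in cover S1 by rewrite (cover_partition pS1).
have [D DS CD] := S12 _ (pblock_mem x1).
have xD : x \in D by apply: (subsetP CD); rewrite mem_pblock.
have yD : y \in D by apply: (subsetP CD); rewrite xy mem_pblock (cover_partition pS1).
by rewrite (def_pblock (partition_trivIset pS2) DS xD) (def_pblock (partition_trivIset pS2) DS yD).
Qed.

Lemma same_block_inj S1 S2 : partition S1 setT -> partition S2 setT ->
  same_block S1 = same_block S2 -> S1 = S2.
Proof.
suff sub S S' : partition S setT -> partition S' setT ->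
    same_block S = same_block S' -> S \subset S'.
  by move=> pS1 pS2 E; apply/eqP; rewrite eqEsubset !sub.
move=> pS pS' E; apply/subsetP => C CS; have [x xC] := partition_block_witness pS CS.
rewrite -(def_pblock (partition_trivIset pS) CS xC) pblock_same_block // E -pblock_same_block //.
by rewrite pblock_mem // (cover_partition pS').
Qed.

Lemma card_same_block_lt S1 S2 : partition S1 setT -> partition S2 setT ->
  refines S1 S2 -> S1 != S2 -> (#|same_block S1| < #|same_block S2|)%N.
Proof.
move=> pS1 pS2 S12 neq; apply: proper_card; rewrite properEneq same_block_sub // andbT.
by apply: contra neq => /eqP/(same_block_inj pS1 pS2)->.
Qed.

Variable K : fieldType.
Local Notation N := #|{: setpart m}|.

(* A nonzero entry [A i l0] of minimal [#|same_block l0|] survives in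
   [(A *m zeta_mx) i l0]: any other [l] refining [l0] has a smaller [same_block]. *)
Lemma zeta_mx_inj k (A : 'M[K]_(k, N)) : A *m zeta_mx K m = 0 -> A = 0.
Proof.
move=> AZ; apply/matrixP => i j; rewrite mxE; apply/eqP/negPn/negP => nz.
have [l0 nz0 min0] :=
  @arg_minnP _ j (fun l => A i l != 0) (fun l => #|same_block (val (enum_val l))|) nz.
move/matrixP: AZ => /(_ i l0); rewrite !mxE (bigD1 l0) //= big1.
  by rewrite !mxE refines_refl mulr1 addr0; apply/eqP.
move=> l nl; rewrite !mxE; case: (boolP (refines _ _)) => [ll0|]; last by rewrite mulr0.
suff -> : A i l = 0 by rewrite mul0r.
apply/eqP; apply: contraTT ll0 => nzl; have := min0 l nzl; rewrite leqNgt; apply: contra => ll0.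
apply: card_same_block_lt (valP (enum_val l)) (valP (enum_val l0)) ll0 _.
by apply/negP => /eqP/val_inj/enum_val_inj ll0'; rewrite ll0' eqxx in nl.
Qed.

Lemma zeta_mx_unit : zeta_mx K m \in unitmx.
Proof.
rewrite -row_free_unit -kermx_eq0; apply/eqP; apply: zeta_mx_inj; exact: mulmx_ker.
Qed.

Lemma zeta_mobius (s t : setpart m) :
  \sum_(r : setpart m) (refines (val s) (val r))%:R * mobius K r t = (s == t)%:R.
Proof.
have := congr1 (fun M : 'M[K]_N => M (enum_rank s) (enum_rank t)) (mulmxV zeta_mx_unit).
rewrite !mxE (inj_eq enum_rank_inj) => <-.
rewrite (reindex (@enum_rank _)) /=; last by apply: onW_bij; exact: enum_rank_bij.
by apply: eq_bigr => r _; rewrite !mxE !enum_rankK.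
Qed.

Lemma mobius_unique (x : setpart m -> K) (t : setpart m) :
  (forall s, \sum_(r : setpart m) (refines (val s) (val r))%:R * x r = (s == t)%:R) ->
  forall r, x r = mobius K r t.
Proof.
move=> zeta_x r.
pose v : 'cV[K]_N := \col_i x (enum_val i).
have Zv : zeta_mx K m *m v = \col_i (enum_val i == t)%:R.
  apply/matrixP => i j; rewrite !mxE -zeta_x (reindex (@enum_rank _)) /=; last first.
    by apply: onW_bij; exact: enum_rank_bij.
  by apply: eq_bigr => r' _; rewrite !mxE !enum_rankK.
have := congr1 (fun M : 'cV[K]_N => M (enum_rank r) 0) (mulKmx zeta_mx_unit v).
rewrite Zv !mxE enum_rankK => <-.
rewrite /mobius (bigD1 (enum_rank t)) //= big1 ?addr0; first by rewrite !mxE enum_rankK eqxx mulr1.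
move=> l nl; rewrite !mxE; case: eqP => [E|]; last by rewrite mulr0.
by move: nl; rewrite -E enum_valK eqxx.
Qed.

End Mobius.

Lemma natr_forall_in (R : comPzSemiRingType) (I : finType) (D : {pred I}) (b : pred I) :
  [forall i in D, b i]%:R = \prod_(i in D) (b i)%:R :> R.
Proof.
have [/forall_inP Db|/forall_inPn[i iD nbi]] := boolP [forall i in D, b i].
  by rewrite big1 // => i /Db->.
by rewrite (bigD1 i) //= (negbTE nbi) mul0r.
Qed.

Lemma prod_enum_set (R : pzSemiRingType) n (B : {set 'I_n}) (G : 'I_n -> R) :
  \prod_(j <- enum B) G j = \prod_(i < n | i \in B) G i.
Proof. by rewrite -[RHS]big_filter [index_enum _]unlock. Qed.

Section MobiusFactorization.
Variables (K : fieldType) (n : nat).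

(* mu(Q, 1_B) in the lattice of partitions of the block [B], computed on
   ['I_#|B|] through the increasing enumeration of [B], as in [restr_block]. *)
Definition block_mobius (B : {set 'I_n}) (Q : {set {set 'I_n}}) : K :=
  mobius K (to_setpart (preim_part B Q)) (one_block #|B|).

Lemma zeta_block_mobius B Q0 : partition Q0 B -> (0 < #|B|)%N ->
  \sum_(Q | partition Q B) (refines Q0 Q)%:R * block_mobius B Q = (Q0 == [set B])%:R.
Proof.
move=> pQ0 B_gt0; pose Q0' := to_setpart (preim_part B Q0).
rewrite (eq_bigr (fun Q => (refines (val Q0') (val (to_setpart (preim_part B Q))))%:R *
                         block_mobius B Q)); last first.
  by move=> Q pQ; rewrite !to_setpartK ?preim_part_partition // refines_preim_part.
rewrite -(sum_setpart_block
  (fun s => (refines (val Q0') (val s))%:R * mobius K s (one_block #|B|))).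
rewrite zeta_mobius -val_eqE /= to_setpartK ?preim_part_partition //.
by rewrite one_block_setE // preim_part_eq_set1.
Qed.

Definition mobius_blocks (P r : setpart n) : K :=
  \prod_(B in val P) block_mobius B (restr_part (val r) B).

Lemma mobius_refines_prod (P t : setpart n) :
  refines (val t) (val P) -> mobius K t P = mobius_blocks P t.
Proof.
move=> tP; have pP := valP P.
pose x r := (refines (val r) (val P))%:R * mobius_blocks P r.
suff <- : x t = mobius K t P by rewrite /x tP mul1r.
apply: mobius_unique => s; rewrite /x; have [sP|sNP] := boolP (refines (val s) (val P)); last first.
  have -> : (s == P) = false by apply: contraNF sNP => /eqP->; apply: refines_refl.
  rewrite big1 // => r _; have [sr|] := boolP (refines (val s) (val r)); last by rewrite mul0r.
  have [rP|] := boolP (refines (val r) (val P)); last by rewrite mul0r mulr0.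
  by case/negP: sNP; apply: refines_trans sr rP.
rewrite (bigID (fun r : setpart n => refines (val r) (val P))) /=.
rewrite [X in _ + X]big1 ?addr0; last first.
  by move=> r /negbTE->; rewrite mul0r mulr0.
under eq_bigr => r rP do rewrite rP mul1r (refines_restr_part pP (valP s) sP rP)
  natr_forall_in -big_split.
rewrite (sum_refines_prod pP (fun B Q => (refines (restr_part (val s) B) Q)%:R * block_mobius B Q)).
rewrite -[s == P]/(val s == val P) (eq_restr_part_set1 pP sP) natr_forall_in.
apply: eq_bigr => B BP; apply: zeta_block_mobius; last exact: card_block_gt0 pP BP.
by apply: (restr_part_partition pP (valP s) sP).
Qed.

End MobiusFactorization.

(** * Noncrossing partitions *)

(* The copy that [phiF] assigns to the letter [j]. *)
Definition block_index n (Q : {set {set 'I_n}}) (j : 'I_n) : nat := index (pblock Q j) (enum Q).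

Lemma block_index_eq n (Q : {set {set 'I_n}}) D j k : partition Q D -> j \in D -> k \in D ->
  (block_index Q j == block_index Q k) = (pblock Q j == pblock Q k).
Proof.
move=> pQ jD kD; apply/eqP/eqP => [|E]; last by rewrite /block_index E.
have inQ x : x \in D -> pblock Q x \in enum Q.
  by move=> xD; rewrite mem_enum pblock_mem // (cover_partition pQ).
by move=> E; apply: (index_inj (pblock Q j) (inQ _ jD) (inQ _ kD) E).
Qed.

Lemma block_index_own n (P : {set {set 'I_n}}) B j :
  partition P setT -> B \in P -> j \in B -> block_index P j = index B (enum P).
Proof. by move=> pP BP jB; rewrite /block_index (def_pblock (partition_trivIset pP) BP jB). Qed.

Lemma noncrossing_block_index n (P : {set {set 'I_n}}) : partition P setT -> noncrossing P ->
  noncrossing_seq [seq block_index P j | j <- enum 'I_n].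
Proof.
move=> pP /forall_inP ncP a b ab; apply/negP => /subseq_map_inv[s' ss' Es'].
case: s' ss' Es' => [|i [|j [|k [|l [|? ?]]]]] // ss' [Ea Eb Ea' Eb'].
have /= /and4P[ij jk kl _] : sorted (fun x y : 'I_n => (x < y)%N) [:: i; j; k; l].
  apply: (subseq_sorted _ ss'); first by move=> ? ? ?; apply: ltn_trans.
  by have := iota_ltn_sorted 0 n; rewrite -val_enum_ord sorted_map.
have cov x : x \in cover P by rewrite (cover_partition pP).
have same x y : block_index P x = block_index P y -> pblock P x = pblock P y.
  by move/eqP; rewrite (block_index_eq pP) ?inE // => /eqP.
have ik : pblock P i = pblock P k by apply: same; rewrite -Ea -Ea'.
have jl : pblock P j = pblock P l by apply: same; rewrite -Eb -Eb'.
have nij : pblock P i != pblock P j by apply: contra ab => /eqP E; rewrite Ea Eb /block_index E.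
move: (ncP _ (pblock_mem (cov i))) => /forall_inP/(_ _ (pblock_mem (cov j))).
rewrite nij => /forallP/(_ i)/forallP/(_ j)/forallP/(_ k)/forallP/(_ l).
have ki : k \in pblock P i by rewrite ik mem_pblock.
have lj : l \in pblock P j by rewrite jl mem_pblock.
by rewrite ij jk kl ki lj !mem_pblock !cov.
Qed.

Section FreeCumulants.
Variables (C : fieldType) (A : algType C) (phi : {scalar A}).
Hypothesis phi1 : phi 1 = 1.
Variable F : free_exch_system phi.
Local Notation psi := (fes_psi F).

Definition phiF_sub n (S : {set {set 'I_n}}) (X : 'I_n -> A) (e : seq 'I_n) :=
  psi (word F (letters (block_index S) X e)).

Lemma phiF_subT n (S : {set {set 'I_n}}) X : phiF F S X = phiF_sub S X (enum 'I_n).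
Proof. by rewrite /phiF /phiF_sub /word big_map enumT. Qed.

Lemma phiF_sub_noncrossing n (P S : {set {set 'I_n}}) X :
  partition P setT -> partition S setT -> refines S P -> noncrossing P ->
  phiF_sub S X (enum 'I_n) = \prod_(B in P) phiF_sub S X (enum B).
Proof.
move=> pP pS SP ncP; have cov x : x \in cover P by rewrite (cover_partition pP).
have covS x : x \in cover S by rewrite (cover_partition pS).
have inP B : B \in P -> B \in enum P by rewrite mem_enum.
rewrite /phiF_sub (psi_letters_blocks phi1 F (grp := block_index P) X
                   (cs := [seq index B (enum P) | B <- enum P])).
- rewrite big_map big_enum /=; apply: eq_bigr => B BP; congr (psi (word F (letters _ _ _))).
  transitivity [seq j <- enum 'I_n | j \in B]; last by rewrite enumT.
  apply: eq_filter => j /=; apply/eqP/idP => [jB|jB]; last exact: block_index_own pP BP jB.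
  by rewrite -(index_inj B (inP _ (pblock_mem (cov j))) (inP _ BP) jB) mem_pblock.
- move=> j k _ _ /eqP; rewrite (block_index_eq pS (in_setT j) (in_setT k)) => /eqP jk.
  have [D DP SD] := refinesP _ _ SP _ (pblock_mem (covS j)).
  have jD : j \in D by apply: (subsetP SD); rewrite mem_pblock.
  have kD : k \in D by apply: (subsetP SD); rewrite jk mem_pblock.
  by rewrite !(block_index_own pP DP).
- exact: noncrossing_block_index.
- by rewrite map_inj_in_uniq ?enum_uniq // => B B' BP B'P; apply: (index_inj B BP B'P).
- by move=> _ /mapP[j _ ->]; apply: map_f; rewrite mem_enum pblock_mem.
Qed.

Lemma phiF_sub_restr_part n (P S : {set {set 'I_n}}) X B :
  partition P setT -> partition S setT -> refines S P -> B \in P ->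
  phiF_sub S X (enum B) = phiF_sub (restr_part S B) X (enum B).
Proof.
move=> pP pS SP BP; apply: (psi_letters_pattern phi1) => j k; rewrite !mem_enum => jB kB.
rewrite (block_index_eq pS (in_setT j) (in_setT k)).
rewrite (block_index_eq (restr_part_partition pP pS SP BP) jB kB).
by rewrite !(pblock_restr_part pP pS SP BP).
Qed.

Lemma phiF_sub_preim_part n (B : {set 'I_n}) Q X : partition Q B ->
  phiF_sub Q X (enum B) = phiF F (preim_part B Q) (restr_block B X).
Proof.
move=> pQ; have pQ' := preim_part_partition pQ.
rewrite phiF_subT /phiF_sub -map_ev_enum /letters -map_comp.
apply: (psi_letters_pattern phi1) => j k _ _ /=.
rewrite (block_index_eq pQ (enum_valP j) (enum_valP k)).
rewrite (block_index_eq pQ' (in_setT j) (in_setT k)).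
rewrite !eq_pblock ?(partition_trivIset pQ) ?(partition_trivIset pQ') //;
  rewrite ?(cover_partition pQ) ?(cover_partition pQ') ?enum_valP ?in_setT //.
by rewrite pblock_preim_part // inE.
Qed.

Lemma phiF_sub_own_block n (P : {set {set 'I_n}}) X B : partition P setT -> B \in P ->
  phiF_sub P X (enum B) = phi (\prod_(i < n | i \in B) X i).
Proof.
move=> pP BP; rewrite /phiF_sub.
have -> : letters (block_index P) X (enum B) = [seq (index B (enum P), X j) | j <- enum B].
  by apply/eq_in_map => j; rewrite mem_enum => jB; rewrite (block_index_own pP BP jB).
by rewrite /word big_map /= -rmorph_prod fes_restr prod_enum_set.
Qed.

Lemma phiF_noncrossing n (P : setpart n) X : noncrossing (val P) ->
  phiF F (val P) X = \prod_(B in val P) phi (\prod_(i < n | i \in B) X i).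
Proof.
move=> ncP; have pP := valP P.
rewrite phiF_subT (phiF_sub_noncrossing X pP pP (refines_refl _) ncP).
by apply: eq_bigr => B BP; apply: phiF_sub_own_block.
Qed.

Lemma KF_noncrossing n (P : setpart n) X : noncrossing (val P) ->
  KF F P X = \prod_(B in val P) KFm F (restr_block B X).
Proof.
move=> ncP; have pP := valP P.
rewrite /KF (eq_bigr (fun s : setpart n => \prod_(B in val P)
    (phiF_sub (restr_part (val s) B) X (enum B) *
     block_mobius C B (restr_part (val s) B)))); last first.
  move=> s sP; rewrite mobius_refines_prod // big_split /= phiF_subT.
  rewrite (phiF_sub_noncrossing X pP (valP s) sP ncP); congr (_ * _).
  by apply: eq_bigr => B BP; apply: (phiF_sub_restr_part X pP (valP s) sP).
rewrite (sum_refines_prod pP (fun B Q => phiF_sub Q X (enum B) * block_mobius C B Q)).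
apply: eq_bigr => B BP; rewrite /KFm /KF [RHS](eq_bigl xpredT); last first.
  by move=> s; rewrite /= refines_one_block ?(card_block_gt0 pP BP).
rewrite (sum_setpart_block
  (fun s => phiF F (val s) (restr_block B X) * mobius C s (one_block #|B|))).
by apply: eq_bigr => Q pQ; rewrite phiF_sub_preim_part // to_setpartK ?preim_part_partition.
Qed.

End FreeCumulants.

Theorem proposition4p3 (R : realType) (A : algType R[i]) (phi : {scalar A})
    (phi1 : phi 1 = 1) (F : free_exch_system phi)
    (n : nat) (P : setpart n) (X : 'I_n -> A) :
  noncrossing (val P) ->
  phiF F (val P) X = \prod_(B in val P) phi (\prod_(i < n | i \in B) X i)
  /\
  KF F P X = \prod_(B in val P) KFm F (restr_block B X).
Proof.
by move=> ncP; split; [exact: phiF_noncrossing | exact: KF_noncrossing].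
Qed.
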